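(* If $G=(U,E)$ is a binary tree, then there exists a category system $\mathcal S\subset 2^U$ such that $(G,\mathcal S)$ is shattered and internally connected and $\operatorname{memdim}(\mathcal S)=O(\operatorname{diam}(G)^2)$.
   Context: A binary tree here is a tree that can be rooted so that every vertex has at most two children. For $u\in U$ let $\mathrm{cat}(u)=\{C\in\mathcal S: u\in C\}$; $\operatorname{memdim}(\mathcal S)=\max_{u\in U}|\mathrm{cat}(u)|$. $\operatorname{diam}(G)$ is the maximum shortest-path distance between two vertices of $G$. $N(s)$ is the neighbor set of $s$. $(G,\mathcal S)$ is internally connected if for every $C\in\mathcal S$ the subgraph of $G$ induced by $C$ is connected. $(G,\mathcal S)$ is shattered if for all $s\neq t$ in $U$ there exist $u\in N(s)$ and $C\in\mathcal S$ with $u,t\in C$ and $s\notin C$ (possibly $u=t$). *)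

From mathcomp Require Import all_boot.
Set Implicit Arguments. Unset Strict Implicit. Unset Printing Implicit Defensive.

Section Graphs.
Variable T : finType.
Implicit Types (e : rel T) (S : {set {set T}}).

Definition simple_graph e := symmetric e /\ irreflexive e.

Definition walk_len e (n : nat) (x y : T) : bool :=
  [exists p : n.-tuple T, path e x p && (last x p == y)].

(* shortest-path distance (for connected graphs; every shortest path has
   fewer than #|T| edges) *)
Definition dist e (x y : T) : nat :=
  find (fun n => walk_len e n x y) (iota 0 #|T|).

Definition diam e : nat := \max_(x : T) \max_(y : T) dist e x y.

Definition graph_connected e := forall x y : T, connect e x y.

Definition acyclic e := forall c : seq T, ~~ [&& cycle e c, uniq c & 2 < size c].

Definition is_tree e := [/\ simple_graph e, graph_connected e & acyclic e].

Definition children e (r v : T) : {set T} :=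
  [set w | e v w && (dist e r w == (dist e r v).+1)].

Definition binary_tree e :=
  is_tree e /\ exists r : T, forall v : T, #|children e r v| <= 2.

Definition nbhd e (s : T) : {set T} := [set u | e s u].

Definition cat S (u : T) : {set {set T}} := [set C in S | u \in C].

Definition memdim S : nat := \max_(u : T) #|cat S u|.

Definition induced_connected e (C : {set T}) :=
  forall x y, x \in C -> y \in C ->
    connect [rel a b | e a b && (a \in C) && (b \in C)] x y.

Definition internally_connected e S :=
  forall C, C \in S -> induced_connected e C.

Definition shattered e S :=
  forall s t : T, s != t ->
    exists u, exists C, [/\ u \in nbhd e s, C \in S, u \in C, t \in C & s \notin C].

End Graphs.

From Pilot Require Import Defs.
From mathcomp Require Import all_boot.
From mathcomp Require Import zify.
Set Implicit Arguments. Unset Strict Implicit. Unset Printing Implicit Defensive.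

(* Root the tree at r and let D bound the depth of its vertices. The category
   system consists of the subtrees [subtree u] and the sets [pruned a k] of the
   vertices below the parent of a, except those below a at depth >= k. A
   subtree separates a vertex s from a descendant t through the child of s on
   the path to t. Otherwise, if a is the ancestor of s that is a child of the
   lowest common ancestor of s and t, then [pruned a (depth s)] contains the
   parent of s and t but not s. Both kinds of sets are closed under taking
   parents up to their top vertex, hence connected. A vertex v belongs to the
   subtrees of its at most D+1 ancestors, and to sets [pruned a k] only when the
   parent of a is one of these ancestors; binarity leaves at most 3 choices of a
   per ancestor and D+2 relevant values of k, so memdim <= (D+1)(1 + 3(D+2)). *)

Section RootedGraph.
Variable T : finType.
Variable e : rel T.
Hypothesis e_sym : symmetric e.
Hypothesis e_connected : graph_connected e.
Variable r : T.

Local Notation depth := (dist e r).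

Lemma walk_lenP n x y :
  reflect (exists p : seq T, [/\ size p = n, path e x p & last x p = y])
          (walk_len e n x y).
Proof.
apply: (iffP existsP) => [[p /andP[ep /eqP lst]] | [p [sz ep lst]]].
  by exists (val p); rewrite size_tuple.
have sz' : size p == n by apply/eqP.
by exists (Tuple sz'); rewrite /= ep lst eqxx.
Qed.

Lemma depth_spec x : depth x < #|T| /\ walk_len e (depth x) r x.
Proof.
have /connectP[p ep ->] := e_connected r x.
case/shortenP: ep => q eq uq _.
have q_small : size q < #|T| by have := max_card (mem (r :: q)); rewrite (card_uniqP uq).
have has_walk : has (fun n => walk_len e n r (last r q)) (iota 0 #|T|).
  by apply/hasP; exists (size q); rewrite ?mem_iota //; apply/walk_lenP; exists q.
have find_lt : depth (last r q) < #|T| by move: has_walk; rewrite has_find size_iota.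
by split=> //; have := nth_find 0 has_walk; rewrite nth_iota.
Qed.

Lemma depth_min n x : walk_len e n r x -> depth x <= n.
Proof.
move=> wx; have [lt_dT _] := depth_spec x.
case: (ltnP n #|T|) => [ltnT | ]; last by move/(leq_trans lt_dT)/ltnW.
rewrite leqNgt; apply/negP => lt_nd.
by have := before_find 0 lt_nd; rewrite nth_iota // add0n wx.
Qed.

Lemma depth_eq0 x : depth x = 0 -> x = r.
Proof.
move=> d0; have [_ /walk_lenP[p [sz _ lst]]] := depth_spec x.
by move: sz lst; rewrite d0; case: p.
Qed.

Lemma depth_edge x y : e y x -> depth x <= (depth y).+1.
Proof.
move=> eyx; have [_ /walk_lenP[q [sz pq lst]]] := depth_spec y.
apply: depth_min; apply/walk_lenP; exists (rcons q x).
by rewrite size_rcons sz rcons_path pq lst eyx last_rcons.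
Qed.

Lemma exists_parent x :
  0 < depth x -> exists y, e x y && ((depth y).+1 == depth x).
Proof.
move=> dx; have [_ /walk_lenP[p [sz ep lst]]] := depth_spec x.
move: sz ep lst; case/lastP: p => [sz|q z]; first by rewrite -sz in dx.
rewrite size_rcons rcons_path last_rcons => sz /andP[pq ez] zx; subst z.
exists (last r q); rewrite e_sym ez /=.
have dq : depth (last r q) <= size q by apply: depth_min; apply/walk_lenP; exists q.
have dz := depth_edge ez; apply/eqP; lia.
Qed.

(* The root is its own parent. *)
Definition parent x := odflt x [pick y | e x y && ((depth y).+1 == depth x)].

Lemma parent_spec x : 0 < depth x -> e x (parent x) && ((depth (parent x)).+1 == depth x).
Proof.
move=> dx; rewrite /parent; case: pickP => [y -> //|no_parent].
by have [y] := exists_parent dx; rewrite no_parent.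
Qed.

Lemma edge_parent x : 0 < depth x -> e x (parent x).
Proof. by case/parent_spec/andP. Qed.

Lemma depth_parent x : depth (parent x) = (depth x).-1.
Proof.
case: (posnP (depth x)) => [d0|dx]; last by case/parent_spec/andP: dx => _ /eqP <-.
by rewrite /parent; case: pickP => [y /andP[_ /eqP]|_ //]; rewrite d0.
Qed.

Lemma parent_root x : depth x = 0 -> parent x = x.
Proof. by move=> d0; rewrite /parent; case: pickP => [y /andP[_ /eqP]|//]; rewrite d0. Qed.

Lemma depth_iter_parent k x : depth (iter k parent x) = depth x - k.
Proof. by elim: k => [|k IH]; rewrite ?subn0 // iterS depth_parent IH; lia. Qed.

Definition ancestor w x := (depth w <= depth x) && (w == iter (depth x - depth w) parent x).

Lemma ancestor_refl x : ancestor x x.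
Proof. by rewrite /ancestor leqnn subnn eqxx. Qed.

Lemma ancestor_iter k x : k <= depth x -> ancestor (iter k parent x) x.
Proof.
move=> kx; rewrite /ancestor depth_iter_parent leq_subr /=.
by have -> : depth x - (depth x - k) = k by lia.
Qed.

Lemma ancestor_root x : ancestor r x.
Proof.
have d0 : depth (iter (depth x) parent x) = 0 by rewrite depth_iter_parent subnn.
by rewrite -(depth_eq0 d0) ancestor_iter.
Qed.

Lemma ancestor_depth_eq w x : ancestor w x -> depth w = depth x -> w = x.
Proof. by case/andP=> _ /eqP wx dwx; rewrite wx dwx subnn. Qed.

Lemma ancestor_depth_lt w x : ancestor w x -> w != x -> depth w < depth x.
Proof.
move=> wx; rewrite ltn_neqAle (andP wx).1 andbT.
by apply: contraNN => /eqP/(ancestor_depth_eq wx)->.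
Qed.

Lemma ancestor_parent w x : ancestor w x -> w != x -> ancestor w (parent x).
Proof.
move=> wx neq_wx; have lt_wx := ancestor_depth_lt wx neq_wx.
case/andP: wx => _ /eqP wx.
rewrite /ancestor depth_parent; apply/andP; split; first lia.
rewrite {1}wx.
have -> : depth x - depth w = ((depth x).-1 - depth w).+1 by lia.
by rewrite iterSr.
Qed.

Lemma ancestor_of_parent a x : 0 < depth x -> ancestor a (parent x) -> ancestor a x.
Proof.
move=> dx /andP[]; rewrite depth_parent => le_ax /eqP ax.
rewrite /ancestor; apply/andP; split; first lia.
have -> : depth x - depth a = ((depth x).-1 - depth a).+1 by lia.
by rewrite iterSr -ax.
Qed.

Lemma parent_closed_connected (C : {set T}) w :
  {in C, forall x, ancestor w x} ->
  {in C, forall x, x != w -> parent x \in C} ->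
  induced_connected e C.
Proof.
move=> anc_C par_C.
set R := [rel a b | e a b && (a \in C) && (b \in C)].
have R_sym : symmetric R.
  by move=> a b /=; rewrite e_sym; case: (a \in C); case: (b \in C); rewrite ?andbT ?andbF.
have to_top n x : x \in C -> depth x - depth w = n -> connect R x w.
  elim: n x => [|n IH] x xC dxw.
    have wx := anc_C x xC; rewrite (ancestor_depth_eq wx) //.
    by have := (andP wx).1; lia.
  have neq_xw : x != w by apply/eqP => xw; rewrite xw subnn in dxw.
  have pxC := par_C x xC neq_xw.
  apply: connect_trans (IH _ pxC _); last by rewrite depth_parent; lia.
  by apply: connect1; rewrite /= xC pxC edge_parent //; lia.
move=> x y xC yC; apply: connect_trans (to_top _ x xC erefl) _.
by rewrite (sym_connect_sym R_sym) (to_top _ y yC erefl).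
Qed.

Definition subtree u := [set x | ancestor u x].

Definition pruned a k :=
  [set x | ancestor (parent a) x && ~~ (ancestor a x && (k <= depth x))].

Lemma subtree_connected u : induced_connected e (subtree u).
Proof.
apply: (@parent_closed_connected _ u) => x; rewrite !inE // => ux neq_xu.
by rewrite ancestor_parent // eq_sym.
Qed.

Lemma pruned_connected a k : induced_connected e (pruned a k).
Proof.
apply: (@parent_closed_connected _ (parent a)) => x; rewrite !inE; first by case/andP.
case/andP=> pa_x not_low neq_x_pa; rewrite eq_sym in neq_x_pa.
have dx : 0 < depth x by have := ancestor_depth_lt pa_x neq_x_pa; lia.
rewrite ancestor_parent //=; apply: contra not_low => /andP[a_px k_px].
by rewrite ancestor_of_parent //=; rewrite depth_parent in k_px; lia.
Qed.

Lemma separate_descendant s t : ancestor s t -> s != t ->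
  exists u, [/\ e s u, t \in subtree u & s \notin subtree u].
Proof.
move=> st neq_st; have lt_st := ancestor_depth_lt st neq_st.
set u := iter (depth t - depth s).-1 parent t.
have du : depth u = (depth s).+1 by rewrite depth_iter_parent; lia.
have pu : parent u = s.
  by case/andP: st => _ /eqP {1}->; rewrite /u -iterS prednK //; lia.
exists u; rewrite !inE; split.
- by rewrite e_sym -{1}pu edge_parent // du.
- by apply: ancestor_iter; lia.
- by apply/negP => /andP[]; rewrite du; lia.
Qed.

Lemma separate_nondescendant s t : ~~ ancestor s t ->
  e s (parent s) /\ exists a, [/\ parent s \in pruned a (depth s),
                                   t \in pruned a (depth s)
                                 & s \notin pruned a (depth s)].
Proof.
move=> not_st.
have ds : 0 < depth s.
  by case: (posnP (depth s)) => // /depth_eq0 sr; rewrite sr ancestor_root in not_st.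
have top_anc : ancestor (iter (depth s) parent s) t.
  have d0 : depth (iter (depth s) parent s) = 0 by rewrite depth_iter_parent subnn.
  by rewrite (depth_eq0 d0) ancestor_root.
have ex_anc : exists i, ancestor (iter i parent s) t by exists (depth s).
have [i anc_i min_i] := ex_minnP ex_anc.
have i_pos : 0 < i by case: i anc_i {min_i} => // anc0; rewrite anc0 in not_st.
have i_le : i <= depth s := min_i _ top_anc.
set a := iter i.-1 parent s.
have pa : parent a = iter i.-1 parent (parent s) by rewrite /a -iterS -iterSr.
have not_at : ~~ ancestor a t by apply/negP => /min_i; lia.
split; first exact: edge_parent.
exists a; rewrite !inE; split.
- rewrite pa ancestor_iter ?depth_parent /=; last lia.
  by apply/negP => /andP[_]; lia.
- by rewrite (negbTE not_at) andbT /a -iterS prednK.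
- rewrite leqnn andbT negb_and negbK; apply/orP; right.
  by apply: ancestor_iter; lia.
Qed.

Definition category_system D :=
  [set subtree u | u : T] :|: [set pruned ak.1 ak.2 | ak : (T * 'I_D.+2)%type].

Lemma category_system_connected D : internally_connected e (category_system D).
Proof.
move=> C; rewrite inE => /orP[] /imsetP[x _ ->].
  exact: subtree_connected.
exact: pruned_connected.
Qed.

Lemma category_system_shattered D :
  (forall x, depth x <= D) -> shattered e (category_system D).
Proof.
move=> depth_le s t neq_st; case: (boolP (ancestor s t)) => [st | not_st].
  have [u [su tu not_su]] := separate_descendant st neq_st.
  exists u, (subtree u); split=> //; rewrite ?inE ?ancestor_refl //.
  by apply/orP; left; apply/imsetP; exists u.
have [s_ps [a [ps_a t_a not_s_a]]] := separate_nondescendant not_st.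
have lt_sD : depth s < D.+2 by have := depth_le s; lia.
exists (parent s), (pruned a (depth s)); split=> //; rewrite ?inE //.
by apply/orP; right; apply/imsetP; exists (a, Ordinal lt_sD).
Qed.

Section Counting.
Hypothesis binary : forall v, #|children e r v| <= 2.
Variable D : nat.
Hypothesis depth_le : forall x, depth x <= D.

Definition ancestors v := [set w | ancestor w v].

Lemma card_ancestors v : #|ancestors v| <= D.+1.
Proof.
apply: leq_trans (_ : #|[set iter (val i) parent v | i : 'I_D.+1]| <= _); last first.
  by apply: leq_trans (leq_imset_card _ _) _; rewrite card_ord.
apply/subset_leq_card/subsetP => w; rewrite inE => /andP[_ /eqP wv].
have lt_D : depth v - depth w < D.+1 by have := depth_le v; lia.
by apply/imsetP; exists (Ordinal lt_D).
Qed.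

(* Index 0 denotes the vertex itself, indices 1 and 2 its children. *)
Definition nth_child (wi : T * 'I_3) := nth wi.1 (wi.1 :: enum (children e r wi.1)) wi.2.

Lemma card_parent_in_ancestors v : #|[set a | ancestor (parent a) v]| <= #|ancestors v| * 3.
Proof.
apply: leq_trans (_ : #|nth_child @: setX (ancestors v) [set: 'I_3]| <= _); last first.
  by apply: leq_trans (leq_imset_card _ _) _; rewrite cardsX cardsT card_ord.
apply/subset_leq_card/subsetP => a; rewrite inE => pa_v.
case: (posnP (depth a)) => [da | da].
  by apply/imsetP; exists (a, ord0); rewrite // !inE -{1}(parent_root da) pa_v.
have a_child : a \in children e r (parent a).
  by case/andP: (parent_spec da) => epa /eqP dpa; rewrite inE e_sym epa dpa eqxx.
have lt_3 : (index a (enum (children e r (parent a)))).+1 < 3.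
  rewrite ltnS; apply: leq_trans (binary (parent a)).
  by rewrite cardE index_mem mem_enum.
apply/imsetP; exists (parent a, Ordinal lt_3); first by rewrite !inE pa_v.
by rewrite /nth_child /= nth_index // mem_enum.
Qed.

Lemma memdim_category_system : memdim (category_system D) <= D.+1 + D.+1 * 3 * D.+2.
Proof.
apply/bigmax_leqP => v _.
pose pruned_pair (ak : T * 'I_D.+2) := pruned ak.1 ak.2.
apply: leq_trans (_ : #|subtree @: ancestors v :|:
         pruned_pair @: setX [set a | ancestor (parent a) v] [set: 'I_D.+2]| <= _).
  apply/subset_leq_card/subsetP => C; rewrite inE => /andP[].
  rewrite inE => /orP[] /imsetP[x _ ->] vC; rewrite inE; apply/orP.
    by left; apply/imsetP; exists x; rewrite // inE; rewrite inE in vC.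
  right; apply/imsetP; exists x => //.
  by move: vC; rewrite !inE => /andP[-> _].
apply: leq_trans (leq_card_setU _ _) _; apply: leq_add.
  by apply: leq_trans (leq_imset_card _ _) _; apply: card_ancestors.
apply: leq_trans (leq_imset_card _ _) _; rewrite cardsX cardsT card_ord leq_mul2r.
apply/orP; right; apply: leq_trans (card_parent_in_ancestors v) _.
by rewrite leq_mul2r card_ancestors orbT.
Qed.

End Counting.
End RootedGraph.

Lemma dist_le_diam (T : finType) (e : rel T) x y : dist e x y <= diam e.
Proof.
apply: leq_trans (leq_bigmax (F := fun y => dist e x y) y) _.
exact: (leq_bigmax (F := fun x => \max_(y : T) dist e x y) x).
Qed.

Theorem lemma5 :
  exists c : nat, forall (T : finType) (e : rel T), binary_tree e ->
    exists S : {set {set T}},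
      [/\ shattered e S, internally_connected e S & memdim S <= c * (diam e) ^ 2].
Proof.
(* (D+1)(1 + 3(D+2)) <= 20 D^2 as soon as D >= 1; D = 0 means a single vertex. *)
exists 20 => T e [[[e_sym _] e_conn _] [r binary]].
have depth_le x : dist e r x <= diam e := dist_le_diam e r x.
case: (posnP (diam e)) => [diam0 | diam_pos].
  have eq_r x : x = r by apply: (depth_eq0 e_conn); have := depth_le x; lia.
  exists set0; split.
  - by move=> s t; rewrite (eq_r s) (eq_r t) eqxx.
  - by move=> C; rewrite inE.
  - apply/bigmax_leqP => u _; rewrite (_ : Defs.cat set0 u = set0) ?cards0 //.
    by apply/setP => C; rewrite !inE.
exists (category_system e r (diam e)); split.
- exact: category_system_shattered.
- exact: category_system_connected.
- apply: leq_trans (memdim_category_system e_sym e_conn binary depth_le) _; nia.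
Qed.
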